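(* Let $\varepsilon>0$, let $y\in L^\infty((E_{\min},E_{\max})\times\Sigma)$ be positive, and set $s_i=\sqrt{\mathscr D^*\big(\int_{E_{\min}}^{E_{\max}}y\,g_i\,dE\big)}$ on $\Omega$, $i=1,\dots,N$; assume each $s_i$ is bounded and bounded away from zero on $\Omega$. On $L^2(\Omega;\mathbb R^N)$ define the quadratic form $$Q_y(\boldsymbol\psi,\boldsymbol\psi)=\frac12\int_\Sigma\big(\mathscr D(\boldsymbol\psi/\boldsymbol s)\big)^TG\,\mathscr D(\boldsymbol\psi/\boldsymbol s)\,d\mathcal H^n,$$ where $\boldsymbol\psi/\boldsymbol s=(\psi_1/s_1,\dots,\psi_N/s_N)$ and $\mathscr D$ is applied componentwise, and let $\lambda_y=\sup_{\|\boldsymbol\psi\|_{L^2}\le1}Q_y(\boldsymbol\psi,\boldsymbol\psi)$, assumed finite. Let $\boldsymbol w^{\mathrm{old}},\boldsymbol w^{\mathrm{new}}\in L^\infty(\Omega;[0,1]^N)$ and define $$A^\varepsilon=\int_\Omega\sum_{i=1}^N\frac{\mathscr D^*\big(\int_{E_{\min}}^{E_{\max}}y\,g_i\,dE\big)\,(w^{\mathrm{new}}_i-w^{\mathrm{old}}_i)^2}{w^{\mathrm{old}}_i+\varepsilon}\,dx,\qquad C=\frac12\int_\Sigma\big(\mathscr D(\boldsymbol w^{\mathrm{new}}-\boldsymbol w^{\mathrm{old}})\big)^TG\,\mathscr D(\boldsymbol w^{\mathrm{new}}-\boldsymbol w^{\mathrm{old}})\,d\mathcal H^n.$$ If $C>0$,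 then $\dfrac{A^\varepsilon}{C}\ge\dfrac1{1+\varepsilon}\,\dfrac1{\lambda_y}$.
   Context: Setting: $n\in\{2,3\}$, $\Omega\subset\mathbb R^n$ nonempty bounded open; $\xi\subset\mathbb R^n\setminus\overline\Omega$ a compact smooth curve of finite length without self-intersections; $L^+_{x,\theta}=\{x+s\theta:s\ge0\}$; $\Sigma=\{(x,\theta)\in\xi\times\mathbb S^{n-1}:\mathcal H^1(L^+_{x,\theta}\cap\Omega)>0\}$ with measure $\mathcal H^n$; $\mathscr Du(x,\theta)=\int_{L^+_{x,\theta}}u\,d\mathcal H^1$ ($u$ extended by $0$ outside $\Omega$), with dual $\mathscr D^*h(z)=\int_\xi|z-x|^{1-n}h\big(x,\tfrac{z-x}{|z-x|}\big)\,d\mathcal H^1(x)$ for $z\in\Omega$ ($h$ extended by $0$ off $\Sigma$). $0<E_{\min}<E_{\max}$; $I_0:[E_{\min},E_{\max}]\to[0,\infty)$ Lebesgue integrable; $g_1,\dots,g_N:[E_{\min},E_{\max}]\to[0,\infty)$ bounded measurable, $\boldsymbol g=(g_1,\dots,g_N)$; $G=\int_{E_{\min}}^{E_{\max}}I_0\,\boldsymbol g\otimes\boldsymbol g\,dE\in\mathbb R^{N\times N}$. *)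

From HB Require Import structures.
From mathcomp Require Import all_boot all_order all_algebra.
From mathcomp Require Import all_classical all_reals all_analysis.
Set Implicit Arguments. Unset Strict Implicit. Unset Printing Implicit Defensive.
Import Order.TTheory GRing.Theory Num.Theory.
Import numFieldNormedType.Exports.
Local Open Scope classical_set_scope.
Local Open Scope ring_scope.

(* R^n is represented by row vectors 'rV[R]_n.  We equip it with the        *)
(* product (= Borel) sigma-algebra generated by the coordinate maps, exactly *)
(* as mathcomp-analysis does for n.-tuple.                                  *)
Definition rV_display : measure_display -> measure_display.
Proof. exact. Qed.

Section measurable_rV.
Context (R : realType) (n : nat).
Let coord : 'I_n -> 'rV[R]_n -> R := fun i x => x ord0 i.
Let s0 : g_sigma_preimage coord set0.
Proof. exact: sigma_algebra0. Qed.
Let sC A : g_sigma_preimage coord A -> g_sigma_preimage coord (~` A).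
Proof. exact: sigma_algebraC. Qed.
Let sU (F : _^nat) : (forall i, g_sigma_preimage coord (F i)) ->
  g_sigma_preimage coord (\bigcup_i (F i)).
Proof. exact: sigma_algebra_bigcup. Qed.
HB.instance Definition _ := @isMeasurable.Build (rV_display default_measure_display)
  'rV[R]_n (g_sigma_preimage coord) s0 sC sU.
End measurable_rV.

Section setting.
Context (R : realType) (n : nat).
Local Notation V := 'rV[R]_n.

(* Euclidean norm on R^n (the library norm on 'rV is the sup norm). *)
Definition enorm (v : V) : R := Num.sqrt (\sum_(i < n) v ord0 i ^+ 2).

Definition sphere : set V := [set th | enorm th = 1].

Definition ext0 (T : Type) (D : set T) (f : T -> R) : T -> R :=
  fun x => if `[< D x >] then f x else 0.

(* mu is the Lebesgue measure of R^n: it gives every half-open box its   *)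
(* volume (this determines mu on the Borel sets of R^n).                  *)
Definition is_lebesgue_rV (mu : {measure set V -> \bar R}) : Prop :=
  forall a b : V, (forall i, a ord0 i <= b ord0 i) ->
    mu [set x | forall i, a ord0 i < x ord0 i <= b ord0 i] =
    (\prod_(i < n) (b ord0 i - a ord0 i))%:E.

(* gam : [0, ell] -> R^n is an arc-length parametrisation of a compact     *)
(* smooth curve without self-intersections: gam is smooth, has unit speed *)
(* and is either injective on [0,ell] (an arc) or ell-periodic and         *)
(* injective on [0,ell[ (a closed curve).                                   *)
Definition arclength_param (gam : R -> V) (ell : R) : Prop :=
  [/\ 0 < ell,
      (forall (k : nat) (t : R), derivable (iter k (@derive1 R V) gam) t 1),
      (forall t, 0 <= t <= ell -> enorm (derive1 gam t) = 1) &
      ((forall s t, 0 <= s <= ell -> 0 <= t <= ell -> gam s = gam t -> s = t)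
       \/
       ((forall t, gam (t + ell) = gam t) /\
        (forall s t, 0 <= s < ell -> 0 <= t < ell -> gam s = gam t -> s = t)))].

Definition curve (gam : R -> V) (ell : R) : set V := gam @` `[0, ell].

Definition cone (B : set V) : set V :=
  [set x | exists r th, [/\ 0 < r <= 1, B th, sphere th & x = r *: th]].

(* nu is the n-dimensional Hausdorff measure on xi x S^{n-1}: with the     *)
(* arc-length parametrisation of xi and the surface measure of the sphere *)
(* sigma(B) = n * Leb(cone B), nu is the image of dt (x) sigma.            *)
Definition is_Hn_curve_sphere (mu : {measure set V -> \bar R})
    (gam : R -> V) (ell : R) (nu : {measure set (V * V) -> \bar R}) : Prop :=
  forall A : set (V * V), measurable A ->
    nu A = (\int[lebesgue_measure]_(t in `[0%R, ell])
              (n%:R%:E * mu (cone [set th | A (gam t, th)])))%E.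

(* {s >= 0 : x + s th in Omega}, i.e. L^+_{x,th} cap Omega in arc length *)
Definition ray_in (Omega : set V) (x th : V) : set R :=
  [set s : R | 0 <= s /\ Omega (x + s *: th)].

Definition Sigma (Omega : set V) (gam : R -> V) (ell : R) : set (V * V) :=
  [set p | [/\ curve gam ell p.1, sphere p.2 &
     (0 < lebesgue_measure (ray_in Omega p.1 p.2))%E]].

Definition Dray (Omega : set V) (u : V -> R) (x th : V) : R :=
  fine (\int[lebesgue_measure]_(s in `[0, +oo[) (ext0 Omega u (x + s *: th))%:E).

(* dual operator  D^* h (z) = int_xi |z-x|^{1-n} h(x,(z-x)/|z-x|) dH^1(x), *)
(* h extended by 0 off Sigma; H^1 on xi via the arc-length parametrisation *)
Definition Dstar (gam : R -> V) (ell : R) (Sig : set (V * V))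
    (h : V * V -> R) (z : V) : R :=
  fine (\int[lebesgue_measure]_(t in `[0%R, ell])
    ((enorm (z - gam t) ^+ n.-1)^-1 *
      ext0 Sig h (gam t, (enorm (z - gam t))^-1 *: (z - gam t)))%:E).

Section vectorial.
Context (N : nat).

Definition Gram (Emin Emax : R) (I0 : R -> R) (g : 'I_N -> R -> R)
    (i j : 'I_N) : R :=
  fine (\int[lebesgue_measure]_(E in `[Emin, Emax]) (I0 E * g i E * g j E)%:E).

Definition qform (G : 'I_N -> 'I_N -> R) (v : 'I_N -> R) : R :=
  \sum_(i < N) \sum_(j < N) v i * G i j * v j.

Definition Qform (nu : {measure set (V * V) -> \bar R}) (Sig : set (V * V))
    (G : 'I_N -> 'I_N -> R) (Omega : set V) (u : 'I_N -> V -> R) : \bar R :=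
  ((2^-1)%:E * \int[nu]_(p in Sig)
     (qform G (fun i => Dray Omega (u i) p.1 p.2))%:E)%E.

Definition L2ball (mu : {measure set V -> \bar R}) (Omega : set V)
    : set ('I_N -> V -> R) :=
  [set psi : 'I_N -> V -> R | (forall i, measurable_fun Omega (psi i)) /\
             (\int[mu]_(z in Omega) (\sum_(i < N) psi i z ^+ 2)%:E <= 1)%E].

End vectorial.
End setting.

From HB Require Import structures.
From mathcomp Require Import all_boot all_order all_algebra.
From mathcomp Require Import all_classical all_reals all_analysis.
From mathcomp Require Import lra ring.
Set Implicit Arguments. Unset Strict Implicit. Unset Printing Implicit Defensive.
Import Order.TTheory GRing.Theory Num.Theory.
Import numFieldNormedType.Exports.
Local Open Scope classical_set_scope.
Local Open Scope ring_scope.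

(** Put [B = int_Omega sum_i (s_i w_i)^2] with [w = w^new - w^old].  For
    every [t > 0] with [t B <= 1] the function [psi = sqrt t * s w] lies in
    the unit ball of [L^2], and [psi / s = sqrt t * w]; since the ray
    transform is linear and the form is quadratic, [Q_y(psi) = t C], hence
    [t C <= lambda_y].  This forces [B > 0] and [C <= lambda_y B].
    Pointwise, [D^* (int y g_i) = s_i^2] and [w^old_i + eps <= 1 + eps], so
    [B <= (1 + eps) A^eps], and the claim follows. *)

Section integral_without_measurability.
Local Open Scope ereal_scope.
Context d (T : measurableType d) (R : realType).
Context (mu : {measure set T -> \bar R}).
Import HBNNSimple.

(* The integrands met below (ray transforms, the dual operator) are not known
   to be measurable, so scaling and monotonicity of the integral are derived
   directly from its definition as a supremum over simple functions. *)
Let nnint (f : T -> \bar R) := ereal_sup [set sintegral mu h |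
  h in [set h : {nnsfun T >-> R} | forall x, (h x)%:E <= f x]].

Let nnint_ge0 f : (forall x, 0 <= f x) -> 0 <= nnint f.
Proof.
by move=> f0; apply: ereal_sup_ubound; exists nnsfun0 => //; exact: sintegral0.
Qed.

Let nnintZl (k : R) f : (0 < k)%R ->
  nnint (fun x => k%:E * f x) = k%:E * nnint f.
Proof.
move=> k0; rewrite /nnint -ereal_sup_pZl //; congr ereal_sup.
have kV0 : (0 <= k^-1)%R by rewrite invr_ge0 ltW.
have kVK r : (k * (k^-1 * r) = r)%R by rewrite mulrA mulfV ?gt_eqF // mul1r.
apply/seteqP; split => z /=.
- move=> [h hf <-{z}]; exists (sintegral mu (scale_nnsfun h kV0)).
    exists (scale_nnsfun h kV0) => // x /=.
    by rewrite -(@lee_pmul2l _ k%:E) ?lte_fin //= -EFinM kVK; exact: hf.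
  by rewrite -sintegralrM; apply: eq_sintegral => x /=; rewrite kVK.
- move=> [_ [h hf <-] <-{z}]; exists (scale_nnsfun h (ltW k0)).
    by move=> x /=; rewrite EFinM lee_pmul2l ?lte_fin //; exact: hf.
  by rewrite -sintegralrM.
Qed.

Let gt0_muleBr (k : R) (a b : \bar R) : (0 < k)%R -> 0 <= a -> 0 <= b ->
  k%:E * (a - b) = k%:E * a - k%:E * b.
Proof.
move=> k0; case: a => [a| |] //; case: b => [b| |] // _ _.
- by rewrite -!EFinM -EFinB mulrBr.
- by rewrite gt0_muleNy ?gt0_muley ?lte_fin.
- by rewrite !gt0_muley ?lte_fin.
- by rewrite !gt0_muley ?gt0_muleNy ?lte_fin.
Qed.

Lemma integralZl_gt0 (D : set T) (k : R) (f : T -> \bar R) : (0 < k)%R ->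
  \int[mu]_(x in D) (k%:E * f x) = k%:E * \int[mu]_(x in D) f x.
Proof.
move=> k0; rewrite /integral erestrict_scale ge0_funeposM ?ltW //.
rewrite ge0_funenegM ?ltW // -!/(nnint _) !nnintZl // gt0_muleBr //.
- by apply: nnint_ge0 => x; exact: funepos_ge0.
- by apply: nnint_ge0 => x; exact: funeneg_ge0.
Qed.

Lemma ge0_le_integral_nonmeas (D : set T) (f g : T -> \bar R) :
  (forall x, D x -> 0 <= f x) -> (forall x, D x -> f x <= g x) ->
  \int[mu]_(x in D) f x <= \int[mu]_(x in D) g x.
Proof.
move=> f0 fg; have g0 x : D x -> 0 <= g x.
  by move=> Dx; exact: le_trans (f0 x Dx) (fg x Dx).
rewrite !ge0_integralE //; apply: ereal_sup_le => z [h hf <-{z}].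
by exists h => // x; apply: le_trans (hf x) _; exact: lee_restrict.
Qed.

End integral_without_measurability.

Section lebesgue_rV.
Context (R : realType) (n : nat).
Local Notation V := 'rV[R]_n.

Lemma measurable_box (a b : V) :
  measurable [set x : V | forall i, a ord0 i < x ord0 i <= b ord0 i].
Proof.
have -> : [set x : V | forall i, a ord0 i < x ord0 i <= b ord0 i] =
    \bigcap_(i in [set: 'I_n]) [set x : V | a ord0 i < x ord0 i <= b ord0 i].
  by apply/seteqP; split => x /= x_in i; [move=> _|]; exact: x_in.
apply: fin_bigcap_measurable => [|i _]; first exact: finite_finset.
apply: sub_sigma_algebra; rewrite (bigD1 i) //=; left.
exists `]a ord0 i, b ord0 i]%classic; first exact: measurable_itv.
by apply/seteqP; split => x /=; rewrite in_itv /=; [case|].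
Qed.

Lemma bounded_set_sub_box (O : set V) : bounded_set O ->
  exists M : R, 0 < M /\ forall x, O x -> forall i, - M < x ord0 i <= M.
Proof.
move=> [M [_ OM]]; exists (`|M| + 2); split; first by rewrite ltr_pwDr.
move=> x Ox i.
have x_le : `|x| <= `|M| + 1.
  by apply: (OM _ _ x Ox); rewrite (le_lt_trans (ler_norm M)) // ltrDl.
have xi_le : `|x ord0 i| <= `|x|.
  by rewrite [leRHS]/Num.norm /= mx_normrE (bigD1 (ord0, i)) //= le_max lexx.
move: (le_trans xi_le x_le); rewrite ler_norml => /andP[? ?].
by apply/andP; split; lra.
Qed.

Lemma bounded_integral_lty (mu : {measure set V -> \bar R}) (O : set V)
    (F : V -> R) (K : R) :
  is_lebesgue_rV mu -> bounded_set O -> 0 <= K ->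
  (forall x, O x -> 0 <= F x <= K) ->
  (\int[mu]_(x in O) (F x)%:E < +oo)%E.
Proof.
move=> leb_mu /bounded_set_sub_box[M [M0 OM]] K0 FK.
pose a : V := const_mx (- M); pose b : V := const_mx M.
pose box := [set x : V | forall i, a ord0 i < x ord0 i <= b ord0 i].
rewrite integral_mkcond; apply: (@le_lt_trans _ _ (\int[mu]_(x in box) K%:E)%E).
  rewrite [leRHS]integral_mkcond; apply: ge0_le_integral_nonmeas => x _.
    by apply: erestrict_ge0 => z Oz; rewrite lee_fin; case/andP: (FK z Oz).
  rewrite /patch; case: ifPn => [/[1!inE] Ox|_]; last first.
    by case: ifPn; rewrite lee_fin.
  rewrite ifT; first by rewrite lee_fin; case/andP: (FK x Ox).
  by rewrite inE => i; rewrite !mxE; exact: OM.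
rewrite integral_cst; last exact: measurable_box.
by rewrite leb_mu -?EFinM ?ltry // => i; rewrite !mxE; lra.
Qed.

End lebesgue_rV.

Section homogeneity.
Context (R : realType) (n N : nat).
Local Notation V := 'rV[R]_n.

Lemma Dray_scale (O : set V) (u v : V -> R) (c : R) (x th : V) : 0 < c ->
  (forall z, O z -> u z = c * v z) -> Dray O u x th = c * Dray O v x th.
Proof.
move=> c0 uv; rewrite /Dray.
under eq_integral => r _.
  have -> : (ext0 O u (x + r *: th))%:E =
            (c%:E * (ext0 O v (x + r *: th))%:E)%E.
    by rewrite -EFinM /ext0; case: asboolP => [/uv->|_]; rewrite ?mulr0.
  over.
rewrite integralZl_gt0 //.
by case: (\int[_]_(_ in _) _)%E => [r| |] /=;
  rewrite ?gt0_muley ?gt0_muleNy ?mulr0.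
Qed.

Lemma qformZ (G : 'I_N -> 'I_N -> R) (v : 'I_N -> R) (c : R) :
  qform G (fun i => c * v i) = c ^+ 2 * qform G v.
Proof.
rewrite /qform mulr_sumr; apply: eq_bigr => i _.
by rewrite mulr_sumr; apply: eq_bigr => j _; ring.
Qed.

Lemma Qform_scale (nu : {measure set (V * V) -> \bar R}) (Sig : set (V * V))
    (G : 'I_N -> 'I_N -> R) (O : set V) (u v : 'I_N -> V -> R) (c : R) :
  0 < c ->
  (forall i z, O z -> u i z = c * v i z) ->
  Qform nu Sig G O u = ((c ^+ 2)%:E * Qform nu Sig G O v)%E.
Proof.
move=> c0 uv; rewrite /Qform muleCA; congr (_ * _)%E.
rewrite -integralZl_gt0 ?exprn_gt0 //; apply: eq_integral => p _.
rewrite -EFinM -qformZ.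
by congr (EFin (qform _ _)); apply/funext => i; exact: Dray_scale (uv i).
Qed.

End homogeneity.

Section real_inequalities.
Context (R : realType).

Lemma rayleigh_ratio_le (b c l : R) : 0 <= b -> 0 < c ->
  (forall t, 0 < t -> t * b <= 1 -> t * c <= l) -> 0 < b /\ c <= l * b.
Proof.
move=> b_ge0 c_gt0 tcl; have [b0|b_neq0] := eqVneq b 0.
  have t_gt0 : 0 < (`|l| + 1) / c by rewrite divr_gt0 // ltr_pwDr.
  have := tcl _ t_gt0; rewrite b0 mulr0 divfK ?gt_eqF // => /(_ ler01).
  by have := ler_norm l; lra.
have b_gt0 : 0 < b by rewrite lt0r b_neq0.
have := tcl b^-1; rewrite invr_gt0 mulVf // => /(_ b_gt0 (lexx 1)).
by rewrite mulrC ler_pdivrMr.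
Qed.

Lemma rayleigh_ratio_le_ereal (B C lam : \bar R) :
  (0 <= B)%E -> (B < +oo)%E -> (0 < C)%E -> (lam < +oo)%E ->
  (forall t : R, 0 < t -> (t%:E * B <= 1)%E -> (t%:E * C <= lam)%E) ->
  [/\ 0 < fine B, 0 < fine C & fine C <= fine lam * fine B].
Proof.
case: B => [b| |] //; rewrite lee_fin => b_ge0 _.
pose t0 := (1 + b)^-1; have t0_gt0 : 0 < t0 by rewrite invr_gt0; lra.
move=> C_gt0 lam_lty H; have := H t0 t0_gt0.
rewrite -EFinM lee_fin mulrC ler_pdivrMr ?mul1r; last lra.
move=> /(_ ltac:(lra)); move: C_gt0 lam_lty H.
case: C => [c| |] //; last first.
  move=> _ lam_lty _; rewrite gt0_muley ?lte_fin // leye_eq => /eqP lamy.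
  by rewrite lamy in lam_lty.
case: lam => [l| |] // + _ H _; rewrite lte_fin => c_gt0.
by have [] := rayleigh_ratio_le b_ge0 c_gt0 H.
Qed.

Lemma ratio_lower_bound (a b c l e : R) : 0 < e -> 0 < b -> 0 < c ->
  b <= (1 + e) * a -> c <= l * b -> (1 + e)^-1 * l^-1 <= a / c.
Proof.
move=> e_gt0 b_gt0 c_gt0 ba cb.
have l_gt0 : 0 < l by rewrite -(pmulr_lgt0 _ b_gt0); apply: lt_le_trans cb.
rewrite -invfM ler_pdivlMr // mulrC ler_pdivrMr ?mulr_gt0 //; last lra.
nra.
Qed.

Lemma weighted_increment_bound (s a b c eps : R) :
  0 < s <= c -> 0 <= a <= 1 -> 0 <= b <= 1 -> 0 < eps ->
  0 <= s ^+ 2 * (b - a) ^+ 2 / (a + eps) <= c ^+ 2 / eps.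
Proof.
move=> /andP[s_gt0 sc] /andP[a_ge0 a_le1] /andP[b_ge0 b_le1] eps_gt0.
have num_ge0 : 0 <= s ^+ 2 * (b - a) ^+ 2 by rewrite mulr_ge0 ?sqr_ge0.
have num_le : s ^+ 2 * (b - a) ^+ 2 <= c ^+ 2.
  have : s ^+ 2 <= c ^+ 2 by nra.
  have : (b - a) ^+ 2 <= 1 by nra.
  have : 0 <= (b - a) ^+ 2 by rewrite sqr_ge0.
  nra.
have inv_le : (a + eps)^-1 <= eps^-1 by rewrite lef_pV2 ?posrE; lra.
apply/andP; split; first by rewrite divr_ge0 //; lra.
by apply: ler_pM; rewrite ?invr_ge0 //; lra.
Qed.

Lemma sq_le_weighted_increment (s a b eps : R) : 0 <= a <= 1 -> 0 < eps ->
  (s * (b - a)) ^+ 2 <= (1 + eps) * (s ^+ 2 * (b - a) ^+ 2 / (a + eps)).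
Proof.
move=> /andP[a_ge0 a_le1] eps_gt0; rewrite exprMn mulrA ler_pdivlMr; last lra.
have : 0 <= s ^+ 2 * (b - a) ^+ 2 by rewrite mulr_ge0 ?sqr_ge0.
nra.
Qed.

End real_inequalities.

Section increment_integrals.
Context (R : realType) (n N : nat) (mu : {measure set 'rV[R]_n -> \bar R}).
Context (O : set 'rV[R]_n) (D s wold wnew : 'I_N -> 'rV[R]_n -> R) (eps : R).
Hypothesis eps_gt0 : 0 < eps.
Hypothesis D_sq : forall i z, O z -> D i z = s i z ^+ 2.
Hypothesis w_bd : forall i z, O z -> 0 <= wold i z <= 1 /\ 0 <= wnew i z <= 1.

Lemma weighted_increment_integral_fin_num (c : R) :
  is_lebesgue_rV mu -> bounded_set O -> (forall i z, O z -> 0 < s i z <= c) ->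
  (\int[mu]_(z in O) (\sum_(i < N)
     D i z * (wnew i z - wold i z) ^+ 2 / (wold i z + eps))%:E)%E \is a fin_num.
Proof.
move=> leb_mu O_bd s_bd.
have term_bd i z : O z ->
    0 <= D i z * (wnew i z - wold i z) ^+ 2 / (wold i z + eps) <= c ^+ 2 / eps.
  move=> Oz; case: (w_bd i Oz) => wo_bd wn_bd.
  rewrite D_sq //.
  exact: weighted_increment_bound (s_bd i z Oz) wo_bd wn_bd eps_gt0.
rewrite ge0_fin_numE; last first.
  by apply: integral_ge0 => z Oz; rewrite lee_fin sumr_ge0 // => i _;
    case/andP: (term_bd i z Oz).
apply: (bounded_integral_lty (K := \sum_(i < N) c ^+ 2 / eps)) => //.
  by rewrite sumr_ge0 // => i _; rewrite divr_ge0 ?sqr_ge0 // ltW.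
move=> z Oz; apply/andP; split.
  by apply: sumr_ge0 => i _; case/andP: (term_bd i z Oz).
by apply: ler_sum => i _; case/andP: (term_bd i z Oz).
Qed.

Lemma sq_increment_integral_le :
  (\int[mu]_(z in O) (\sum_(i < N) (s i z * (wnew i z - wold i z)) ^+ 2)%:E <=
   (1 + eps)%:E * \int[mu]_(z in O) (\sum_(i < N)
     D i z * (wnew i z - wold i z) ^+ 2 / (wold i z + eps))%:E)%E.
Proof.
rewrite -integralZl_gt0 ?addr_gt0 ?ltr01 //.
apply: ge0_le_integral_nonmeas => z Oz.
  by rewrite lee_fin sumr_ge0 // => i _; rewrite sqr_ge0.
rewrite -EFinM lee_fin mulr_sumr; apply: ler_sum => i _; rewrite D_sq //.
by apply: sq_le_weighted_increment; case: (w_bd i Oz).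
Qed.

End increment_integrals.

Lemma Qform_le_rayleigh_sup (R : realType) (n N : nat)
    (mu : {measure set 'rV[R]_n -> \bar R})
    (nu : {measure set ('rV[R]_n * 'rV[R]_n) -> \bar R})
    (Sig : set ('rV[R]_n * 'rV[R]_n)) (G : 'I_N -> 'I_N -> R)
    (O : set 'rV[R]_n) (s w : 'I_N -> 'rV[R]_n -> R) (t : R) :
  (forall i, measurable_fun O (s i)) -> (forall i, measurable_fun O (w i)) ->
  (forall i z, O z -> 0 < s i z) -> 0 < t ->
  (t%:E * \int[mu]_(z in O) (\sum_(i < N) (s i z * w i z) ^+ 2)%:E <= 1)%E ->
  (t%:E * Qform nu Sig G O w <=
   ereal_sup [set Qform nu Sig G O (fun i z => (psi i z / s i z)%R)
             | psi in L2ball (N:=N) mu O])%E.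
Proof.
move=> ms mw s_gt0 t_gt0 tB.
have sqrt_t_gt0 : 0 < Num.sqrt t by rewrite sqrtr_gt0.
apply: ereal_sup_ubound; exists (fun i z => Num.sqrt t * (s i z * w i z)).
  split=> [i|].
    by do 2 apply: measurable_realfun.measurable_funM => //.
  apply: le_trans tB; rewrite -integralZl_gt0 // le_eqVlt; apply/orP; left.
  apply/eqP/eq_integral => z _; rewrite -EFinM mulr_sumr; congr EFin.
  by apply: eq_bigr => i _; rewrite exprMn sqr_sqrtr // ltW.
rewrite (@Qform_scale _ _ _ _ _ _ _ _ w (Num.sqrt t)) ?sqr_sqrtr ?ltW //.
by move=> i z Oz; rewrite mulrA mulrAC mulfK // gt_eqF // s_gt0.
Qed.

Theorem lemma3p6 (R : realType) (n N : nat)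
  (mu : {measure set 'rV[R]_n -> \bar R})
  (Omega : set 'rV[R]_n) (gam : R -> 'rV[R]_n) (ell : R)
  (nu : {measure set ('rV[R]_n * 'rV[R]_n) -> \bar R})
  (Emin Emax : R) (I0 : R -> R) (g : 'I_N -> R -> R)
  (eps : R) (y : R * ('rV[R]_n * 'rV[R]_n) -> R)
  (wold wnew : 'I_N -> 'rV[R]_n -> R) :
  (n = 2%N \/ n = 3%N) ->
  is_lebesgue_rV mu ->
  Omega !=set0 -> open Omega -> bounded_set Omega ->
  arclength_param gam ell ->
  curve gam ell `&` closure Omega = set0 ->
  is_Hn_curve_sphere mu gam ell nu ->
  0 < Emin -> Emin < Emax ->
  (forall E, Emin <= E <= Emax -> 0 <= I0 E) ->
  lebesgue_measure.-integrable `[Emin, Emax] (EFin \o I0) ->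
  (forall i, measurable_fun `[Emin, Emax] (g i)) ->
  (forall i E, Emin <= E <= Emax -> 0 <= g i E) ->
  (exists M, forall i E, Emin <= E <= Emax -> g i E <= M) ->
  0 < eps ->
  let Sig := Sigma Omega gam ell in
  measurable_fun (`]Emin, Emax[ `*` Sig) y ->
  (exists M, forall q, (`]Emin, Emax[ `*` Sig) q -> `|y q| <= M) ->
  (forall q, (`]Emin, Emax[ `*` Sig) q -> 0 < y q) ->
  let h (i : 'I_N) (p : 'rV[R]_n * 'rV[R]_n) : R :=
    fine (\int[lebesgue_measure]_(E in `]Emin, Emax[) (y (E, p) * g i E)%:E) in
  let s (i : 'I_N) (z : 'rV[R]_n) : R := Num.sqrt (Dstar gam ell Sig (h i) z) in
  (forall i, measurable_fun Omega (s i)) ->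
  (exists c1 c2, 0 < c1 /\ forall i z, Omega z -> c1 <= s i z <= c2) ->
  let G := Gram Emin Emax I0 g in
  let lam := ereal_sup [set Qform nu Sig G Omega (fun i z => psi i z / s i z)
                        | psi in L2ball (N:=N) mu Omega] in
  (lam < +oo)%E ->
  (forall i, measurable_fun Omega (wold i)) ->
  (forall i, measurable_fun Omega (wnew i)) ->
  (forall i z, Omega z -> 0 <= wold i z <= 1 /\ 0 <= wnew i z <= 1) ->
  let A := (\int[mu]_(z in Omega)
     (\sum_(i < N) Dstar gam ell Sig (h i) z * (wnew i z - wold i z) ^+ 2
                   / (wold i z + eps))%:E)%E in
  let C := Qform nu Sig G Omega (fun i z => wnew i z - wold i z) in
  (0 < C)%E ->
  (1 + eps)^-1 * (fine lam)^-1 <= fine A / fine C.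
Proof.
move=> _ leb_mu _ _ O_bd _ _ _ _ _ _ _ _ _ _ eps_gt0 Sig _ _ _ h s ms.
move=> [c1 [c2 [c1_gt0 s_bd]]] G lam lam_lty mwo mwn w_bd A C C_gt0.
pose w i z := wnew i z - wold i z.
pose B := (\int[mu]_(z in Omega) (\sum_(i < N) (s i z * w i z) ^+ 2)%:E)%E.
have s_bd' i z : Omega z -> 0 < s i z <= c2.
  by move=> Oz; case/andP: (s_bd i z Oz) => /(lt_le_trans c1_gt0) ->.
have s_gt0 i z : Omega z -> 0 < s i z by move=> /(s_bd' i z) /andP[].
have Ds i z : Omega z -> Dstar gam ell Sig (h i) z = s i z ^+ 2.
  by move=> Oz; rewrite sqr_sqrtr // ltW // -sqrtr_gt0 s_gt0.
have A_fin : A \is a fin_num.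
  pose D i := Dstar gam ell Sig (h i).
  exact: (weighted_increment_integral_fin_num (D := D) eps_gt0 Ds w_bd
    leb_mu O_bd s_bd').
have BA : (B <= (1 + eps)%:E * A)%E.
  exact: sq_increment_integral_le eps_gt0 Ds w_bd.
have B_ge0 : (0 <= B)%E.
  by apply: integral_ge0 => z _; rewrite lee_fin sumr_ge0 // => i _;
    rewrite sqr_ge0.
have B_lty : (B < +oo)%E.
  by apply: le_lt_trans BA _; rewrite -(fineK A_fin) -EFinM ltry.
have mw i : measurable_fun Omega (w i).
  exact: measurable_realfun.measurable_funB (mwn i) (mwo i).
have [B_gt0 fC_gt0 CB] := rayleigh_ratio_le_ereal B_ge0 B_lty C_gt0 lam_lty
  (fun t t_gt0 => Qform_le_rayleigh_sup nu Sig G ms mw s_gt0 t_gt0).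
apply: ratio_lower_bound eps_gt0 B_gt0 fC_gt0 _ CB.
by rewrite -lee_fin EFinM !fineK // ge0_fin_numE.
Qed.
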